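(* Let $s\ge 0$ and $\Gamma_1,\Gamma_2\subseteq\{0,1\}^\infty$. If a learning function $l_1$ $s$-learns every $X\in\Gamma_1$ and a learning function $l_2$ $s$-learns every $X\in\Gamma_2$, then there exists a learning function $l_3$ that $s$-learns every $X\in\Gamma_1\cup\Gamma_2$.
   Context: A learning function is a function $l:\{0,1\}^*\to\{0,1\}$ (identifying yes with $1$ and no with $0$). $Y\upharpoonright i$ is the length-$i$ prefix of $Y$; $\lambda$ is the uniform (Lebesgue) measure on $\{0,1\}^\infty$. For a nonempty string $w$, the path average is $\mathrm{AVG}_l(w)=\frac{1}{|w|}\sum_{i=0}^{|w|} l(w\upharpoonright i)$. A learning function $l$ satisfies the measure condition if for all $n\in\mathbb N$, $\lambda(\{Y\in\{0,1\}^\infty : \#\{i\in\mathbb N: l(Y\upharpoonright i)=1\}\ge n\})\le 2^{-n}$. For $s\ge0$, $l$ $s$-learns $X$ iff $l$ satisfies the measure condition and $\limsup_{n\to\infty}\mathrm{AVG}_l(X\upharpoonright n)\ge 1-s$ (no computability restriction on $l$). *)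

From mathcomp Require Import all_boot all_order all_algebra.
From mathcomp Require Import all_classical all_reals all_analysis.
Set Implicit Arguments. Unset Strict Implicit. Unset Printing Implicit Defensive.
Import Order.TTheory GRing.Theory Num.Theory.
Local Open Scope classical_set_scope.
Local Open Scope ring_scope.

Definition prefix (Y : nat -> bool) (i : nat) : seq bool := mkseq Y i.

(* Learning function: {0,1}^* -> {0,1} (true = yes = 1). *)
Definition learning_function := seq bool -> bool.

Definition cylinder (w : seq bool) : set (nat -> bool) :=
  [set Y | prefix Y (size w) = w].

(* Uniform (Lebesgue) outer measure on Cantor space, defined as the infimum
   over countable cylinder covers (entries None = no cylinder) of the sum of
   2^{-|w|}.  On measurable sets this is the uniform measure lambda. *)
Definition cover_weight (R : realType) (c : option (seq bool)) : R :=
  match c with Some w => (2 ^- size w) | None => 0 end.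

Definition lambda (R : realType) (A : set (nat -> bool)) : \bar R :=
  ereal_inf [set x : \bar R | exists C : nat -> option (seq bool),
     (A `<=` \bigcup_(k in [set: nat])
                 (match C k with Some w => cylinder w | None => set0 end))
     /\ x = (\sum_(0 <= k <oo) ((cover_weight R (C k))%:E))%E].

Definition at_least_ones (l : learning_function) (Y : nat -> bool) (n : nat) : Prop :=
  exists N : nat, (n <= \sum_(i < N) (l (prefix Y i) : nat))%N.

Definition measure_condition (R : realType) (l : learning_function) : Prop :=
  forall n : nat, (lambda R [set Y | at_least_ones l Y n] <= ((2 : R) ^- n)%:E)%E.

Definition AVG (R : realType) (l : learning_function) (w : seq bool) : R :=
  (\sum_(i < (size w).+1) ((l (take i w) : nat)%:R : R)) / (size w)%:R.

(* l s-learns X. The sequence is indexed by n; the term n = 0 (empty prefix,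
   where AVG is undefined) does not affect the limsup. *)
Definition s_learns (R : realType) (s : R) (l : learning_function) (X : nat -> bool) : Prop :=
  measure_condition R l /\
  ((1 - s)%:E <= limn_esup (fun n : nat => (AVG R l (prefix X n))%:E))%E.

(* Run both learners side by side and answer yes exactly when the larger of
   their two running yes-counts goes up, except for the first such time.  Then
   the merged count on a prefix is max(c1, c2) - 1.  Hence n + 1 merged yeses
   force n + 2 yeses of one learner, a set of measure at most
   2 * 2^-(n+2) = 2^-(n+1); and the merged path average is at least either
   learner's path average minus 1/n, which does not change the limsup. *)
From Pilot Require Import Defs.
From mathcomp Require Import all_boot all_order all_algebra.
From mathcomp Require Import all_classical all_reals all_analysis.
From mathcomp Require Import lra zify.
Set Implicit Arguments. Unset Strict Implicit. Unset Printing Implicit Defensive.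
Import Order.TTheory GRing.Theory Num.Theory.
Local Open Scope classical_set_scope.
Local Open Scope ring_scope.

Definition interleave (T : Type) (f g : nat -> T) (k : nat) : T :=
  if odd k then g k./2 else f k./2.

Lemma interleave_double (T : Type) (f g : nat -> T) k :
  interleave f g k.*2 = f k.
Proof. by rewrite /interleave odd_double doubleK. Qed.

Lemma interleave_doubleS (T : Type) (f g : nat -> T) k :
  interleave f g k.*2.+1 = g k.
Proof. by rewrite /interleave /= odd_double uphalf_double. Qed.

Section OuterMeasure.
Context {R : realType}.

Lemma sum_interleave (f g : nat -> R) M :
  \sum_(0 <= i < M.*2) interleave f g i
  = \sum_(0 <= i < M) f i + \sum_(0 <= i < M) g i.
Proof.
elim: M => [|M IH]; first by rewrite !big_geq // addr0.
rewrite doubleS !big_nat_recr //= IH interleave_double interleave_doubleS.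
by rewrite -!addrA; congr (_ + _); rewrite addrCA.
Qed.

Local Open Scope ereal_scope.

Lemma nneseries_interleave (f g : nat -> R) :
  (forall k, 0 <= f k)%R -> (forall k, 0 <= g k)%R ->
  \sum_(0 <= k <oo) (interleave f g k)%:E
  <= \sum_(0 <= k <oo) (f k)%:E + \sum_(0 <= k <oo) (g k)%:E.
Proof.
move=> f0 g0.
have fg0 k : (0 <= interleave f g k)%R by rewrite /interleave; case: odd.
apply: lime_le; first by apply: is_cvg_nneseries => n _ _; rewrite lee_fin.
apply: nearW => N.
apply: (@le_trans _ _ (\sum_(0 <= i < N.*2) (interleave f g i)%:E)).
  rewrite (@big_cat_nat _ _ _ N 0 N.*2) //=; last by rewrite -addnn leq_addr.
  by rewrite leeDl //; apply: sume_ge0 => i _; rewrite lee_fin.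
rewrite sumEFin sum_interleave EFinD -!sumEFin.
by apply: leeD; apply: nneseries_lim_ge => n _ _; rewrite lee_fin.
Qed.

Lemma cover_weight_ge0 c : (0 <= cover_weight R c)%R.
Proof. by case: c => [w|] //=; rewrite invr_ge0 exprn_ge0. Qed.

Lemma lambda_le A B : A `<=` B -> lambda R A <= lambda R B.
Proof.
move=> AB; apply: ereal_inf_le_tmp => x [C [cov ->]]; exists C; split=> //.
exact: subset_trans AB cov.
Qed.

(* Interleaving two almost optimal covers of A and B covers A `|` B. *)
Lemma lambda_setU_le A B a b : lambda R A <= a%:E -> lambda R B <= b%:E ->
  lambda R (A `|` B) <= (a + b)%:E.
Proof.
move=> hA hB; apply/lee_addgt0Pr => e e0.
have e2 : (0 < e / 2)%R by rewrite divr_gt0.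
have /ereal_inf_lt [_ [C1 [cov1 ->]] lt1] : lambda R A < (a + e / 2)%:E.
  by apply: le_lt_trans hA _; rewrite lte_fin ltrDl.
have /ereal_inf_lt [_ [C2 [cov2 ->]] lt2] : lambda R B < (b + e / 2)%:E.
  by apply: le_lt_trans hB _; rewrite lte_fin ltrDl.
apply: (@le_trans _ _ (\sum_(0 <= k <oo) (cover_weight R (interleave C1 C2 k))%:E)).
  apply: ereal_inf_lbound; exists (interleave C1 C2); split => //.
  move=> Y [/cov1 [k _ Hk] | /cov2 [k _ Hk]].
    by exists k.*2; rewrite // interleave_double.
  by exists k.*2.+1; rewrite // interleave_doubleS.
rewrite (@eq_eseriesr _ _
    (fun k => (interleave (cover_weight R \o C1) (cover_weight R \o C2) k)%:E));
  last by move=> k _; rewrite /interleave; case: odd.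
apply: le_trans (@nneseries_interleave (cover_weight R \o C1) (cover_weight R \o C2)
   (fun k => cover_weight_ge0 _) (fun k => cover_weight_ge0 _)) _.
apply: le_trans (leeD (ltW lt1) (ltW lt2)) _.
by rewrite -EFinD lee_fin; lra.
Qed.

End OuterMeasure.

Definition count_yes (l : learning_function) (w : seq bool) : nat :=
  \sum_(i < size w) l (take i w).

Definition count_yes_prefix (l : learning_function) (Y : nat -> bool) N : nat :=
  \sum_(i < N) l (Defs.prefix Y i).

Definition merge_learner (l1 l2 : learning_function) : learning_function :=
  fun w =>
    let m := maxn (count_yes l1 w) (count_yes l2 w) in
    (m < maxn (count_yes l1 w + l1 w) (count_yes l2 w + l2 w))%N && (0 < m)%N.

Lemma merge_learnerC l1 l2 : merge_learner l1 l2 = merge_learner l2 l1.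
Proof. by apply: funext => w; rewrite /merge_learner maxnC [maxn (_ + _) _]maxnC. Qed.

Lemma size_cantor_prefix Y N : size (Defs.prefix Y N) = N.
Proof. exact: size_mkseq. Qed.

Lemma take_cantor_prefix Y N i : (i <= N)%N -> take i (Defs.prefix Y N) = Defs.prefix Y i.
Proof. by move=> iN; rewrite /Defs.prefix /mkseq -map_take take_iota (minn_idPl iN). Qed.

Lemma count_yesE l Y N : count_yes l (Defs.prefix Y N) = count_yes_prefix l Y N.
Proof.
rewrite /count_yes size_cantor_prefix; apply: eq_bigr => i _.
by rewrite take_cantor_prefix // ltnW.
Qed.

Lemma count_yes_prefixS l Y N :
  count_yes_prefix l Y N.+1 = (count_yes_prefix l Y N + l (Defs.prefix Y N))%N.
Proof. exact: big_ord_recr. Qed.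

Lemma count_yes_prefix_merge l1 l2 Y N :
  count_yes_prefix (merge_learner l1 l2) Y N =
  (maxn (count_yes_prefix l1 Y N) (count_yes_prefix l2 Y N)).-1.
Proof.
elim: N => [|N IH]; first by rewrite /count_yes_prefix !big_ord0.
rewrite !count_yes_prefixS IH /merge_learner !count_yesE.
case: (l1 _); case: (l2 _);
case: ltnP; case: posnP => /=; lia.
Qed.

Lemma measure_condition_merge (R : realType) l1 l2 :
  measure_condition R l1 -> measure_condition R l2 ->
  measure_condition R (merge_learner l1 l2).
Proof.
move=> h1 h2 [|n].
  apply: le_trans (h1 0%N); apply: lambda_le => Y _; exists 0%N.
  by rewrite big_ord0.
have sub : [set Y | at_least_ones (merge_learner l1 l2) Y n.+1] `<=`
    [set Y | at_least_ones l1 Y n.+2] `|` [set Y | at_least_ones l2 Y n.+2].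
  move=> Y [N]; rewrite -/(count_yes_prefix _ Y N) count_yes_prefix_merge => hN.
  have [?|?] : (n.+2 <= count_yes_prefix l1 Y N \/
                n.+2 <= count_yes_prefix l2 Y N)%N by lia.
    by left; exists N.
  by right; exists N.
apply: le_trans (lambda_le sub) _.
apply: le_trans (lambda_setU_le (h1 n.+2) (h2 n.+2)) _.
by rewrite lee_fin exprS invfM mulrC -splitr.
Qed.

Lemma AVG_prefix (R : realType) l X n :
  AVG R l (Defs.prefix X n) = (count_yes_prefix l X n.+1)%:R / n%:R.
Proof.
rewrite /AVG size_cantor_prefix /count_yes_prefix natr_sum; congr (_ / _).
by apply: eq_bigr => i _; rewrite take_cantor_prefix // -ltnS.
Qed.

Lemma AVG_merge_ge (R : realType) l1 l2 X n :
  AVG R l1 (Defs.prefix X n) - n%:R^-1 <= AVG R (merge_learner l1 l2) (Defs.prefix X n).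
Proof.
rewrite !AVG_prefix count_yes_prefix_merge.
set c := count_yes_prefix l1 X n.+1; set m := maxn _ _.
have : (c <= m.-1.+1)%N by rewrite /m /c; lia.
rewrite -(ler_nat R) -natr1 => hc.
rewrite -[X in _ - X <= _]mul1r -mulrBl; apply: ler_wpM2r; first by rewrite invr_ge0.
lra.
Qed.

(* The esups of v dominate those of u up to 1/k, and 1/k tends to 0. *)
Lemma limn_esup_le_shift (R : realType) (u v : R^nat) :
  (forall n, u n - n%:R^-1 <= v n) ->
  (limn_esup (fun n => (u n)%:E) <= limn_esup (fun n => (v n)%:E))%E.
Proof.
move=> huv; rewrite !limn_esup_lim.
rewrite (cvg_lim (@ereal_hausdorff R) (@cvg_esups_inf _ (fun n => (u n)%:E))).
rewrite (cvg_lim (@ereal_hausdorff R) (@cvg_esups_inf _ (fun n => (v n)%:E))).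
apply/lee_addgt0Pr => e e0; rewrite -leeBlDr //.
apply: le_ereal_inf_tmp => _ [m _ <-].
pose M := (Num.truncn e^-1).+1.
have hM : M%:R^-1 < e.
  by rewrite -[e]invrK ltf_pV2 ?posrE ?invr_gt0 ?ltr0n // truncnS_gt.
pose k := maxn m M.
apply: (@le_trans _ _ (esups (fun n => (u n)%:E) k - e%:E)%E).
  by rewrite leeD2r //; apply: ereal_inf_lbound; exists k.
rewrite leeBlDr //; apply: ge_ereal_sup => _ [j /= kj <-].
have Mj : (M <= j)%N by apply: leq_trans kj; rewrite leq_maxr.
have mj : (m <= j)%N by apply: leq_trans kj; rewrite leq_maxl.
apply: (@le_trans _ _ ((v j)%:E + e%:E)%E).
  rewrite -EFinD lee_fin.
  have hj : j%:R^-1 <= M%:R^-1 :> R.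
    by rewrite lef_pV2 ?posrE ?ltr0n ?ler_nat // (leq_trans _ Mj).
  have := huv j; lra.
by rewrite leeD2r //; apply: ereal_sup_ubound; exists j.
Qed.

Lemma s_learns_merge (R : realType) (s : R) l1 l2 X :
  measure_condition R l2 -> s_learns s l1 X -> s_learns s (merge_learner l1 l2) X.
Proof.
move=> mc2 [mc1 hX]; split; first exact: measure_condition_merge.
apply: le_trans hX _; apply: limn_esup_le_shift => n; exact: AVG_merge_ge.
Qed.

Theorem mainTheorem4 (R : realType) (s : R) (G1 G2 : set (nat -> bool))
    (l1 l2 : learning_function) :
  0 <= s ->
  (forall X, G1 X -> s_learns s l1 X) ->
  (forall X, G2 X -> s_learns s l2 X) ->
  exists l3 : learning_function, forall X, (G1 `|` G2) X -> s_learns s l3 X.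
Proof.
move=> _ H1 H2.
have [[X1 /H1 [mc1 _]]|G10] := pselect (exists X, G1 X); last first.
  by exists l2 => X [G1X|/H2//]; case: G10; exists X.
have [[X2 /H2 [mc2 _]]|G20] := pselect (exists X, G2 X); last first.
  by exists l1 => X [/H1//|G2X]; case: G20; exists X.
exists (merge_learner l1 l2) => X [/H1|/H2] hX; first exact: s_learns_merge.
by rewrite merge_learnerC; exact: s_learns_merge.
Qed.
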